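(* Let $n\ge 2$ and consider the asynchronous $(n,k)$ game on the complete graph with agent set $[n]=\{1,\dots,n\}$ consisting of $n_r$ rejectors and $n-n_r$ random followers, where the threshold satisfies $k\le n-n_r$. Then the probability that a decision is made in finite time, i.e. $P\big(\exists\, t\ge 0:\ \sum_{i\in[n]}x_i(t)\ge k\big)$, is at most $\dfrac{n-n_r}{2k}$.
   Context: Each agent $i\in[n]$ holds an opinion $x_i(t)\in\{0,1\}$ at time $t=0,1,2,\dots$. The social graph is complete: every agent's social neighbors are all the other $n-1$ agents. In the $(n,k)$ game a decision is made at time $t$ if $\sum_{i\in[n]}x_i(t)\ge k$. The game is asynchronous: at each time step a single agent, chosen uniformly at random from $[n]$ (independently of the past), updates its opinion, and all other opinions stay the same. A rejector holds opinion $0$ at all times. A random follower has initial opinion distributed as Bernoulli$(1/2)$ (independently across agents), and when it updates it adopts the current opinion of one of its social neighbors chosen uniformly at random. *)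

From mathcomp Require Import all_boot all_order all_algebra.
Set Implicit Arguments. Unset Strict Implicit. Unset Printing Implicit Defensive.
Import Order.TTheory GRing.Theory Num.Theory.

(* Agents are 'I_n.  A configuration is x : {ffun 'I_n -> bool} (true = 1).
   R : {set 'I_n} is the set of rejectors; all other agents are random followers. *)

Definition init_conf (n : nat) (R : {set 'I_n}) (b : {ffun 'I_n -> bool})
  : {ffun 'I_n -> bool} :=
  [ffun i => if i \in R then false else b i].

(* One asynchronous step with random choice c = (i, j'): agent i updates;
   the social neighbour chosen is  lift i j'  (uniform over the n-1 agents
   different from i when j' is uniform in 'I_n.-1). *)
Definition step (n : nat) (R : {set 'I_n}) (x : {ffun 'I_n -> bool})
  (c : 'I_n * 'I_n.-1) : {ffun 'I_n -> bool} :=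
  [ffun j => if j == c.1 then (if c.1 \in R then false else x (lift c.1 c.2))
             else x j].

Definition conf_at (n : nat) (R : {set 'I_n}) (b : {ffun 'I_n -> bool})
  (s : seq ('I_n * 'I_n.-1)) (t : nat) : {ffun 'I_n -> bool} :=
  foldl (step R) (init_conf R b) (take t s).

Definition decided (n k : nat) (x : {ffun 'I_n -> bool}) : bool :=
  k <= \sum_(i < n) (x i : nat).

(* Probability that a decision is made at some time t in {0,...,T}:
   b is uniform on {ffun 'I_n -> bool} (so follower opinions are i.i.d.
   Bernoulli(1/2)), and the T step choices are i.i.d. uniform on
   'I_n * 'I_n.-1 (agent uniform in [n], neighbour uniform among the others). *)
Definition prob_decision_by (F : realFieldType) (n k : nat) (R : {set 'I_n})
  (T : nat) : F :=
  (\sum_(b : {ffun 'I_n -> bool}) \sum_(s : T.-tuple ('I_n * 'I_n.-1))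
      (if [exists t : 'I_T.+1, decided k (conf_at R b s t)] then 1 else 0))
  / ((2 ^ n * (n * n.-1) ^ T)%N)%:R.

(* The number S of agents holding opinion 1 is a supermartingale: an updating
   follower i copies a uniform other agent, whose opinion has mean
   (S - x_i)/(n-1), so averaging over the uniform choice of i the expected
   change of S is (1/n) sum_i ((S - x_i)/(n-1) - x_i) = 0, and a rejector can
   only lower S.  By the maximal inequality for nonnegative supermartingales,
   S ever reaches k with probability at most E[S_0]/k = (n - n_r)/(2k). *)

From mathcomp Require Import all_boot all_order all_algebra.
From mathcomp Require Import zify.
Set Implicit Arguments. Unset Strict Implicit. Unset Printing Implicit Defensive.
Import Order.TTheory GRing.Theory Num.Theory.
Local Open Scope ring_scope.

Lemma big_tupleS (R : Type) (idx : R) (op : Monoid.com_law idx) (C : finType)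
    (T : nat) (G : T.+1.-tuple C -> R) :
  \big[op/idx]_(s : T.+1.-tuple C) G s =
  \big[op/idx]_(c : C) \big[op/idx]_(s : T.-tuple C) G [tuple of c :: s].
Proof.
rewrite pair_big /= (reindex (fun p : C * T.-tuple C => [tuple of p.1 :: p.2])).
  by apply: eq_bigr => -[c s].
exists (fun t => (thead t, [tuple of behead t])) => [[c s] _ | t _].
  by congr pair; apply: val_inj.
by rewrite [RHS](tuple_eta t).
Qed.

Section MaximalInequality.

Variables (S : Type) (C : finType) (f : S -> C -> S) (V : S -> nat) (k : nat).

Hypothesis V_super : forall x, (\sum_(c : C) V (f x c) <= #|C| * V x)%N.

Definition reaches T x (s : T.-tuple C) : bool :=
  [exists t : 'I_T.+1, k <= V (foldl f x (take t s))]%N.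

Lemma reaches_now T x (s : T.-tuple C) : (k <= V x)%N -> reaches x s.
Proof. by move=> kVx; apply/existsP; exists ord0; rewrite take0. Qed.

Lemma reaches0 x (s : 0.-tuple C) : reaches x s = (k <= V x)%N.
Proof.
apply/existsP/idP => [[[[|t] //=]]|]; first by rewrite take0.
by move=> kVx; exists ord0; rewrite take0.
Qed.

Lemma reaches_cons T x c (s : T.-tuple C) :
  reaches x [tuple of c :: s] = (k <= V x)%N || reaches (f x c) s.
Proof.
apply/existsP/orP => [[[[|t] lt_t] /= kVt] | [kVx | /existsP [t kVt]]].
- by left.
- by right; apply/existsP; exists (Ordinal (lt_t : (t < T.+1)%N)).
- by exists ord0.
- by exists (lift ord0 t).
Qed.

Lemma sum_reaches_now T x :
  (k <= V x)%N -> (\sum_(s : T.-tuple C) reaches x s = #|C| ^ T)%N.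
Proof.
by move=> kVx; under eq_bigr do rewrite reaches_now //; rewrite sum1_card card_tuple.
Qed.

Lemma maximal_inequality T x :
  (k * \sum_(s : T.-tuple C) reaches x s <= #|C| ^ T * V x)%N.
Proof.
elim: T x => [|T IH] x; have [kVx | kVx] := leqP k (V x).
- by rewrite sum_reaches_now // mulnC leq_mul2l kVx orbT.
- by rewrite big1 ?muln0 // => s _; rewrite reaches0 leqNgt kVx.
- by rewrite sum_reaches_now // mulnC leq_mul2l kVx orbT.
- rewrite big_tupleS big_distrr /=.
  under eq_bigr do under eq_bigr do rewrite reaches_cons leqNgt kVx /=.
  apply: (@leq_trans (\sum_(c : C) #|C| ^ T * V (f x c))).
    by apply: leq_sum => c _; exact: IH.
  by rewrite -big_distrr /= expnS -mulnA mulnCA leq_mul2l V_super orbT.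
Qed.

End MaximalInequality.

Section VoterWithRejectors.

Variables (n : nat) (R : {set 'I_n}).

Definition ones (x : {ffun 'I_n -> bool}) : nat := \sum_(i < n) (x i : nat).

Lemma ones_lift (x : {ffun 'I_n -> bool}) i :
  (\sum_(j < n.-1) (x (lift i j) : nat) + x i = ones x)%N.
Proof. by rewrite /ones (bigD1_ord i) //= addnC. Qed.

Lemma ones_step (x : {ffun 'I_n -> bool}) i j :
  (ones (step R x (i, j)) + x i = ones x + (if i \in R then 0 else x (lift i j)))%N.
Proof.
rewrite /ones (bigD1 i) //= [in RHS](bigD1 i) //= ffunE eqxx /=.
rewrite (eq_bigr (fun l => (x l : nat))) => [|l /negbTE l_i]; last first.
  by rewrite ffunE l_i.
by case: (i \in R) => /=; lia.
Qed.

Lemma ones_step_row (x : {ffun 'I_n -> bool}) i :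
  (\sum_(j < n.-1) ones (step R x (i, j)) + n * x i <= n * ones x)%N.
Proof.
have n_gt0 : (0 < n)%N by apply: leq_ltn_trans (ltn_ord i).
have : (\sum_(j < n.-1) (ones (step R x (i, j)) + x i) <=
         \sum_(j < n.-1) (ones x + x (lift i j)))%N.
  by apply: leq_sum => j _; rewrite ones_step leq_add2l; case: (i \in R).
rewrite !big_split /= !sum_nat_const card_ord.
have mul_pred a : (n * a = n.-1 * a + a)%N by rewrite -{1}(prednK n_gt0) mulSnr.
have := ones_lift x i; rewrite !mul_pred.
(* Naming the sums makes lia see their syntactically different copies as one atom. *)
set L := (\sum_(j < n.-1) x (lift i j))%N.
set Si := (\sum_(j < n.-1) ones _)%N.
lia.
Qed.

Lemma ones_supermartingale (x : {ffun 'I_n -> bool}) :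
  (\sum_(c : 'I_n * 'I_n.-1) ones (step R x c) <= #|{: 'I_n * 'I_n.-1}| * ones x)%N.
Proof.
have : (\sum_(i < n) (\sum_(j < n.-1) ones (step R x (i, j)) + n * x i) <=
         \sum_(i < n) n * ones x)%N.
  by apply: leq_sum => i _; apply: ones_step_row.
rewrite big_split /= -big_distrr /= -/(ones x) sum_nat_const card_ord.
rewrite card_prod !card_ord pair_big /=.
under [X in (X + _ <= _)%N -> _]eq_bigr do rewrite -surjective_pairing.
have -> : (n * (n * ones x) = n * n.-1 * ones x + n * ones x)%N.
  by move: (ones x) => a; case: (n) => // m; rewrite mulnA -mulnDl mulnS addnC.
by rewrite leq_add2r.
Qed.

Lemma sum_ones_init :
  ((\sum_(b : {ffun 'I_n -> bool}) ones (init_conf R b)) * 2 = 2 ^ n * (n - #|R|))%N.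
Proof.
pose flip (b : {ffun 'I_n -> bool}) := [ffun i => ~~ b i].
have flipK : involutive flip by move=> b; apply/ffunP => i; rewrite !ffunE negbK.
have followers : (\sum_(i < n) (i \notin R : nat) = n - #|R|)%N.
  rewrite -[X in (X - _)%N](card_ord n) -[in RHS](setCK R) -cardsCs.
  rewrite -sum1_card [RHS]big_mkcond /=.
  by apply: eq_bigr => i _; rewrite in_setC; case: (i \in R).
have ones_flip b : (ones (init_conf R b) + ones (init_conf R (flip b)) = n - #|R|)%N.
  rewrite /ones -big_split -followers; apply: eq_bigr => i _.
  by rewrite !ffunE; case: (i \in R); case: (b i).
rewrite muln2 -addnn {2}(reindex_inj (can_inj flipK)) -big_split /=.
by rewrite (eq_bigr _ (fun b _ => ones_flip b)) sum_nat_const card_ffun card_bool card_ord.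
Qed.

End VoterWithRejectors.

Definition decision_count n k (R : {set 'I_n}) T : nat :=
  \sum_(b : {ffun 'I_n -> bool}) \sum_(s : T.-tuple ('I_n * 'I_n.-1))
    reaches (step R) (@ones n) k (init_conf R b) s.

Lemma prob_decision_byE (F : realFieldType) n k (R : {set 'I_n}) T :
  prob_decision_by F k R T =
  (decision_count k R T)%:R / (2 ^ n * (n * n.-1) ^ T)%:R.
Proof.
rewrite /prob_decision_by natr_sum; congr (_ / _).
apply: eq_bigr => b _; rewrite natr_sum; apply: eq_bigr => s _.
have -> : reaches (step R) (@ones n) k (init_conf R b) s =
          [exists t : 'I_T.+1, decided k (conf_at R b s t)] by [].
by case: ifP.
Qed.

Lemma decision_count_le n k (R : {set 'I_n}) T :
  (decision_count k R T * (2 * k) <= (n - #|R|) * (2 ^ n * (n * n.-1) ^ T))%N.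
Proof.
have card_choices : #|{: 'I_n * 'I_n.-1}| = (n * n.-1)%N.
  by rewrite card_prod !card_ord.
apply: (@leq_trans (2 * ((n * n.-1) ^ T * \sum_b ones (init_conf R b)))).
  rewrite (mulnC (decision_count k R T)) -mulnA leq_mul2l /=.
  rewrite big_distrr big_distrr /=; apply: leq_sum => b _.
  by rewrite -card_choices; apply/maximal_inequality/ones_supermartingale.
by rewrite mulnCA (mulnC 2) sum_ones_init mulnCA [leqRHS]mulnCA (mulnC (n - _)%N).
Qed.

Theorem theorem1 (F : realFieldType) (n k : nat) (R : {set 'I_n}) :
  (2 <= n)%N -> (1 <= k)%N -> (k <= n - #|R|)%N ->
  forall T : nat,
    prob_decision_by F k R T <= (n - #|R|)%:R / (2 * k)%:R.
Proof.
move=> n_ge2 k_gt0 _ T.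
have size_gt0 : (0 < 2 ^ n * (n * n.-1) ^ T)%N.
  by rewrite muln_gt0 !expn_gt0 muln_gt0 /=; lia.
rewrite prob_decision_byE ler_pdivrMr ?ltr0n // mulrAC.
rewrite ler_pdivlMr ?ltr0n ?muln_gt0 // -!natrM ler_nat.
exact: decision_count_le.
Qed.
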